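(* There exist decision trees $T=T_n:\{0,1\}^{n}\times\{0,1\}^{\binom{n}{2}}\to\{0,1\}$ (one for each number of vertices $n\ge 2$), each evaluable in time polynomial in $n$, and a constant $l$ (independent of $n$), such that the local-iteration algorithm $\mathcal{A}^l[T]$ can be evaluated in time polynomial in $n$, but $\mathcal{A}^l[T]$, viewed as a Boolean function of its input bits (the initialization vector in $\{0,1\}^n$ and the $\binom{n}{2}$ adjacency bits of the graph), cannot be represented by decision trees of size polynomial in $n$.
   Context: Graphs are simple labeled graphs on vertex set $[n]=\{1,\dots,n\}$, encoded by their $\binom{n}{2}$ adjacency bits; $\mathcal{N}(v)$ denotes the neighborhood of $v$. A decision tree $T:\{0,1\}^D\to\{0,1\}$ is a rooted binary tree whose internal nodes are labeled by literals ($x_i$ or $\neg x_i$) of input variables and whose leaves are labeled $0$ or $1$; each input follows a root-to-leaf path and outputs the leaf label; its size is its number of nodes. For an aggregation function $g$ taking the previous hidden bits, the graph $G$ and a vertex $v$, the local-iteration algorithm $\mathcal{A}^l[g]:\{0,1\}^n\times\mathcal{G}_n\to\{0,1\}$ on input $(\textsc{Init},G)$ sets $h_{v,0}=\textsc{Init}(v)$ for all $v\in[n]$, then for $t=1,\dots,l$ and all $v\in[n]$ sets $h_{v,t}=g\big((h_{u,t-1})_{u\in\mathcal{N}(v)},G,v\big)$, and returns $h_{n,l}$. Here the aggregator is a decision tree $T$ reading the bits of previous hidden states and the adjacency bits. *)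

From mathcomp Require Import all_boot.
Set Implicit Arguments. Unset Strict Implicit. Unset Printing Implicit Defensive.

(* Adjacency-bit indices of a simple graph on [n] = 'I_n : unordered pairs
   {i,j}, represented as ordered pairs (i,j) with i < j.  There are
   binomial(n,2) of them. *)
Definition edge (n : nat) := {p : 'I_n * 'I_n | p.1 < p.2}.

Definition graph (n : nat) := edge n -> bool.

(* Input variables of the aggregator / of A^l[T]: n "vertex" bits
   (previous hidden states, resp. the initialization vector) followed by
   the binomial(n,2) adjacency bits. *)
Definition var (n : nat) := ('I_n + edge n)%type.

Definition adj n (G : graph n) (u v : 'I_n) : bool :=
  [exists e : edge n, G e &&
     ((((val e).1 == u) && ((val e).2 == v)) ||
      (((val e).1 == v) && ((val e).2 == u)))].

(* Decision trees over variables of type X: internal nodes are labeled by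
   a literal (x, true) = x or (x, false) = ~x, with two subtrees; on input
   a, if the literal is true we go to the second subtree, else the first. *)
Inductive dtree (X : Type) :=
| Leaf of bool
| Node of X & bool & dtree X & dtree X.
Arguments Leaf {X}.

Definition lit_val X (a : X -> bool) (x : X) (pos : bool) : bool :=
  if pos then a x else ~~ a x.

Fixpoint deval X (T : dtree X) (a : X -> bool) : bool :=
  match T with
  | Leaf b => b
  | Node x pos t0 t1 => if lit_val a x pos then deval t1 a else deval t0 a
  end.

Fixpoint dsize X (T : dtree X) : nat :=
  match T with
  | Leaf _ => 1
  | Node _ _ t0 t1 => (dsize t0 + dsize t1).+1
  end.

Fixpoint dcost X (T : dtree X) (a : X -> bool) : nat :=
  match T with
  | Leaf _ => 1
  | Node x pos t0 t1 => (if lit_val a x pos then dcost t1 a else dcost t0 a).+1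
  end.

Definition agg_input n (G : graph n) (h : 'I_n -> bool) (v : 'I_n) : var n -> bool :=
  fun x => match x with
           | inl u => adj G u v && h u
           | inr e => G e
           end.

Fixpoint hidden n (T : dtree (var n)) (init : 'I_n -> bool) (G : graph n)
    (t : nat) : 'I_n -> bool :=
  match t with
  | 0 => init
  | t'.+1 => fun v => deval T (agg_input G (hidden T init G t') v)
  end.

(* A^l[T] as a Boolean function of its input bits (Init, G):
   returns h_{n,l}, the state of the last vertex (index n-1 in 'I_n). *)
Definition local_iter n (T : dtree (var n)) (l : nat) (a : var n -> bool) : bool :=
  [exists v : 'I_n,
     (val v == n.-1) && hidden T (fun u => a (inl u)) (fun e => a (inr e)) l v].

Definition local_iter_cost n (T : dtree (var n)) (l : nat) (a : var n -> bool) : nat :=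
  \sum_(t < l) \sum_(v : 'I_n)
     dcost T (agg_input (fun e => a (inr e))
                        (hidden T (fun u => a (inl u)) (fun e => a (inr e)) t) v).

From mathcomp Require Import all_boot zify.
Set Implicit Arguments. Unset Strict Implicit. Unset Printing Implicit Defensive.

(* The aggregator T_n XORs the hidden bits of the neighbours among the first
   m = floor(log2 n) vertices, so it has fewer than 2n nodes.  After two rounds
   the last vertex outputs the XOR over u, w < m of
   init(u) adj(u, w) adj(w, n-1).  Fixing init(u) to [u < h] and adj(w, n-1) to
   [h <= w] leaves the parity of the h (m - h) edge bits between {u < h} and
   {h <= w < m}, and a decision tree computing a parity of k free variables on
   a subcube has at least 2^k nodes.  For n = 4^t and h = t this is
   2^(t^2) = n^(t/2) nodes. *)

Definition parity (X : finType) (V : {set X}) (a : X -> bool) : bool :=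
  \big[addb/false]_(x in V) a x.

Definition agree_off (X : finType) (V : {set X}) (a a0 : X -> bool) : Prop :=
  forall x, x \notin V -> a x = a0 x.

Section Parity.
Variable X : finType.
Implicit Types (V : {set X}) (a : X -> bool).

Lemma paritySD1 V a x : x \in V -> parity V a = a x (+) parity (V :\ x) a.
Proof. exact: big_setD1. Qed.

Lemma parity_with V a x b :
  x \in V -> parity V ([eta a with x |-> b]) = b (+) parity (V :\ x) a.
Proof.
move=> xV; rewrite (paritySD1 _ xV) /= eqxx; congr (_ (+) _).
by apply: eq_bigr => y; rewrite !inE /= => /andP [/negPf ->].
Qed.

Lemma agree_off_with V a a0 x b : x \in V ->
  agree_off (V :\ x) a ([eta a0 with x |-> b]) -> agree_off V a a0 /\ a x = b.
Proof.
move=> xV a_a0; split; last by rewrite a_a0 ?inE ?eqxx // /= eqxx.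
move=> y yV; have yx : y != x by apply: contraNneq yV => ->.
by rewrite a_a0 ?inE ?negb_and ?yV ?orbT // /= (negPf yx).
Qed.

End Parity.

Lemma lit_valE X (a : X -> bool) x pos : lit_val a x pos = (a x == pos).
Proof. by rewrite /lit_val; case: pos; case: (a x). Qed.

(* Querying a free variable leaves, in both branches, a parity of the remaining
   free variables; querying a fixed one leaves the whole parity in one branch. *)
Lemma subcube_parity_dsize_ge (X : finType) (D : dtree X) V a0 c :
  (forall a, agree_off V a a0 -> deval D a = c (+) parity V a) ->
  2 ^ #|V| <= dsize D.
Proof.
elim: D V a0 c => [b|x pos t0 IH0 t1 IH1] V a0 c /= D_par.
  case: (set_0Vmem V) => [->|[x xV]]; first by rewrite cards0.
  have leaf v : b = c (+) (v (+) parity (V :\ x) a0).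
    rewrite -parity_with // -D_par //.
    by move=> y; rewrite /=; case: eqP => // ->; rewrite xV.
  by have := leaf false; rewrite {1}(leaf true); case: (c); case: (parity _ _).
have [xV|xNV] := boolP (x \in V).
  have branch v : 2 ^ #|V :\ x| <= dsize (if v == pos then t1 else t0).
    have sub_par a : agree_off (V :\ x) a ([eta a0 with x |-> v]) ->
        (if v == pos then deval t1 a else deval t0 a) = (c (+) v) (+) parity (V :\ x) a.
      move=> a_a0; have [aV ax] := agree_off_with xV a_a0.
      by rewrite -ax -lit_valE D_par // (paritySD1 _ xV) addbA.
    by case: (v == pos) sub_par => sub_par; [apply: IH1 | apply: IH0]; exact: sub_par.
  have := branch pos; have := branch (~~ pos); rewrite eqxx (cardsD1 x V) xV expnS.
  by case: (pos) => /=; lia.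
have lit_const a : agree_off V a a0 -> lit_val a x pos = lit_val a0 x pos.
  by move=> a_a0; rewrite !lit_valE (a_a0 x xNV).
case L: (lit_val a0 x pos).
  suff: 2 ^ #|V| <= dsize t1 by lia.
  by apply: (IH1 _ a0 c) => a a_a0; rewrite -D_par // lit_const // L.
suff: 2 ^ #|V| <= dsize t0 by lia.
by apply: (IH0 _ a0 c) => a a_a0; rewrite -D_par // lit_const // L.
Qed.

Fixpoint parity_tree X (s : seq X) (b : bool) : dtree X :=
  match s with
  | [::] => Leaf b
  | x :: s' => Node x true (parity_tree s' b) (parity_tree s' (~~ b))
  end.

Lemma deval_parity_tree X (s : seq X) b a :
  deval (parity_tree s b) a = b (+) \big[addb/false]_(x <- s) a x.
Proof.
elim: s b => [|x s IHs] b /=; first by rewrite big_nil addbF.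
by rewrite big_cons IHs; case: (a x); rewrite /= ?addNb ?addbN.
Qed.

Lemma dsize_parity_tree X (s : seq X) b :
  (dsize (parity_tree s b)).+1 = 2 ^ (size s).+1.
Proof.
elim: s b => [|x s IHs] b //=.
by have := IHs b; have := IHs (~~ b); rewrite [2 ^ _.+2]expnS; lia.
Qed.

Lemma dcost_le_dsize X (T : dtree X) a : dcost T a <= dsize T.
Proof.
elim: T => [b|x pos t0 IH0 t1 IH1] //=.
case: (lit_val a x pos); rewrite ltnS.
  by apply: leq_trans IH1 _; rewrite leq_addl.
by apply: leq_trans IH0 _; rewrite leq_addr.
Qed.

Lemma local_iter_cost_le n (T : dtree (var n)) l a :
  local_iter_cost T l a <= l * (n * dsize T).
Proof.
rewrite /local_iter_cost -[n in n * _]card_ord -sum_nat_const.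
rewrite -[l in l * _]card_ord -sum_nat_const.
by apply: leq_sum => t _; apply: leq_sum => v _; apply: dcost_le_dsize.
Qed.

Lemma card_ord_range n lo hi : hi <= n -> #|[set i : 'I_n | lo <= i < hi]| = hi - lo.
Proof.
move=> hi_n; rewrite -sum1_card -[hi - lo]muln1 -sum_nat_const_nat big_geq_mkord.
by rewrite (big_ord_widen_cond n _ (fun=> 1) hi_n); apply: eq_bigl => i; rewrite inE.
Qed.

Lemma trunc_log2_lt n : 0 < n -> trunc_log 2 n < n.
Proof. by move=> n_gt0; apply: leq_trans (ltn_expl _ _) (trunc_logP _ _). Qed.

Lemma adj_edge n (G : graph n) (e : edge n) : adj G (val e).1 (val e).2 = G e.
Proof.
apply/existsP/idP => [[e' /andP [Ge' /orP [] /andP [/eqP e1 /eqP e2]]] | Ge].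
- by have -> : e = e' by apply/val_inj/injective_projections.
- by have := valP e'; rewrite e1 e2 ltnNge ltnW // (valP e).
- by exists e; rewrite Ge !eqxx.
Qed.

Lemma local_iterE n (T : dtree (var n)) l a (v : 'I_n) : val v = n.-1 ->
  local_iter T l a = hidden T (fun u => a (inl u)) (fun e => a (inr e)) l v.
Proof.
move=> vE; apply/existsP/idP => [[w /andP [/eqP wE]] | hv].
  by have -> : v = w by apply: val_inj; rewrite vE wE.
by exists v; rewrite vE eqxx.
Qed.

Definition low_vertices n : {set 'I_n} := [set u : 'I_n | u < trunc_log 2 n].

Definition low_parity_tree n : dtree (var n) :=
  parity_tree [seq inl u | u in low_vertices n] false.

Lemma deval_low_parity_tree n x :
  deval (low_parity_tree n) x = \big[addb/false]_(u in low_vertices n) x (inl u).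
Proof. by rewrite deval_parity_tree big_image. Qed.

Lemma dsize_low_parity_tree n : 0 < n -> dsize (low_parity_tree n) < 2 * n.
Proof.
move=> n_gt0; rewrite -ltnS dsize_parity_tree size_image expnS ltnS leq_mul2l /=.
have := card_ord_range 0 (ltnW (trunc_log2_lt n_gt0)); rewrite subn0 => ->.
exact: trunc_logP.
Qed.

Lemma local_iter2_low_parity_tree n a (v : 'I_n) : val v = n.-1 ->
  let G := fun e => a (inr e) in
  local_iter (low_parity_tree n) 2 a =
  \big[addb/false]_(w in low_vertices n)
     (adj G w v && \big[addb/false]_(u in low_vertices n) (adj G u w && a (inl u))).
Proof.
move=> vE G; rewrite (local_iterE _ _ _ vE) /= deval_low_parity_tree.
by apply: eq_bigr => w _ /=; rewrite deval_low_parity_tree.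
Qed.

Section Restriction.
Variables n h : nat.
Hypotheses (n_gt0 : 0 < n) (h_le_log : h <= trunc_log 2 n).
Local Notation m := (trunc_log 2 n).

Definition cross_pairs : {set 'I_n * 'I_n} :=
  setX [set u : 'I_n | 0 <= u < h] [set w : 'I_n | h <= w < m].

Definition cross_edges : {set edge n} := [set e | val e \in cross_pairs].

Definition free_vars : {set var n} := inr @: cross_edges.

Definition restriction (x : var n) : bool :=
  match x with
  | inl u => u < h
  | inr e => ((val e).2 == n.-1 :> nat) && (h <= (val e).1)
  end.

Lemma val_cross_edges : val @: cross_edges = cross_pairs.
Proof.
apply/setP => p; apply/imsetP/idP => [[e] | p_cross]; first by rewrite inE => ? ->.
have p_lt : p.1 < p.2.
  by move: p_cross; rewrite !inE => /andP [/andP [_ p1_h] /andP [h_p2 _]]; apply: leq_trans h_p2.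
by exists (exist _ p p_lt); rewrite // in_set.
Qed.

Lemma card_free_vars : #|free_vars| = h * (m - h).
Proof.
have m_le_n := ltnW (trunc_log2_lt n_gt0).
rewrite card_imset; last exact: inr_inj.
rewrite -(card_imset _ val_inj) val_cross_edges cardsX !card_ord_range ?subn0 //.
exact: leq_trans h_le_log m_le_n.
Qed.

Lemma parity_free_vars a :
  parity free_vars a = \big[addb/false]_(p in cross_pairs) adj (fun e => a (inr e)) p.1 p.2.
Proof.
rewrite /parity big_imset; last by move=> ? ? _ _; apply: inr_inj.
rewrite -val_cross_edges big_imset; last by move=> ? ? _ _; apply: val_inj.
by apply: eq_bigr => e _; rewrite adj_edge.
Qed.

Lemma local_iter_restricted a : agree_off free_vars a restriction ->
  local_iter (low_parity_tree n) 2 a = parity free_vars a.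
Proof.
move=> a_res; have m_lt_n := trunc_log2_lt n_gt0.
have last_lt : n.-1 < n by rewrite prednK.
set last : 'I_n := Ordinal last_lt.
rewrite (local_iter2_low_parity_tree _ (v := last)) //= parity_free_vars.
set G := fun e => a (inr e).
have init_low u : a (inl u) = (u < h) by rewrite a_res //; apply/imsetP => -[].
have adj_last w : w \in low_vertices n -> adj G w last = (h <= w).
  rewrite in_set => w_m; have w_last : w < last by rewrite /=; lia.
  have /= -> := adj_edge G (exist _ (w, last) w_last).
  rewrite /G a_res /= ?eqxx // mem_imset ?inE; last exact: inr_inj.
  have m_le_last : m <= last by rewrite /=; lia.
  by rewrite /= [last < m]ltnNge m_le_last !andbF.
transitivity (\big[addb/false]_(w in low_vertices n | h <= w)
                \big[addb/false]_(u in low_vertices n | u < h) adj G u w).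
  rewrite big_mkcondr; apply: eq_bigr => w w_low; rewrite adj_last //.
  case: (h <= w) => //=; rewrite big_mkcondr.
  by apply: eq_bigr => u _; rewrite init_low andbC.
rewrite exchange_big pair_big; apply: eq_bigl => -[u w].
by rewrite !inE /=; lia.
Qed.

Lemma local_iter_low_parity_dsize_ge (D : dtree (var n)) :
  (forall a, deval D a = local_iter (low_parity_tree n) 2 a) ->
  2 ^ (h * (m - h)) <= dsize D.
Proof.
move=> D_eq; rewrite -card_free_vars.
apply: (@subcube_parity_dsize_ge _ _ _ restriction false) => a a_res.
by rewrite D_eq local_iter_restricted.
Qed.

End Restriction.

Theorem lemma4p1 :
  exists (T : forall n : nat, dtree (var n)) (l k : nat),
    (forall n, 2 <= n -> dsize (T n) <= n ^ k) /\
    (forall n, 2 <= n -> forall a : var n -> bool,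
        local_iter_cost (T n) l a <= n ^ k) /\
    (forall k' : nat, exists n, 2 <= n /\
        forall D : dtree (var n),
          (forall a : var n -> bool, deval D a = local_iter (T n) l a) ->
          n ^ k' < dsize D).
Proof.
have pow4 n : 2 <= n -> 4 * (n * n) <= n ^ 4.
  by move=> n_ge2; rewrite !expnS expn0; nia.
exists low_parity_tree, 2, 4; split; [|split].
- move=> n n_ge2; have := dsize_low_parity_tree (ltnW n_ge2); have := pow4 n n_ge2.
  nia.
- move=> n n_ge2 a; apply: leq_trans (local_iter_cost_le _ _ _) _.
  have := dsize_low_parity_tree (ltnW n_ge2); have := pow4 n n_ge2.
  nia.
- move=> k'; pose t := k'.*2.+1; exists (2 ^ t.*2).
  have n_ge2 : 2 <= 2 ^ t.*2 by rewrite -{1}(expn1 2) leq_exp2l // double_gt0.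
  split=> // D D_eq.
  have log_n : trunc_log 2 (2 ^ t.*2) = t.*2 by rewrite trunc_expnK.
  have h_le : t <= trunc_log 2 (2 ^ t.*2) by rewrite log_n -addnn leq_addr.
  have := local_iter_low_parity_dsize_ge (ltnW n_ge2) h_le D_eq.
  apply: leq_trans; rewrite log_n -addnn addnK -expnM ltn_exp2l //; nia.
Qed.
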